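(* Let $X$ be a topological space, and assume that for each $x\in X$, player ONE does not have a winning strategy in the game $\alpha^{\mathrm{game}}(X,x)$. Then $X$ is $\alpha_{2^-}$ (and thus locally Ramsey).
   Context: Convention: a ''sequence'' is a countably infinite set; a countably infinite set $A$ converges to $x$ if $x\notin A$ and every neighborhood of $x$ contains all but finitely many elements of $A$. $\lim_m x_{nm}=x$ means $x_{nm}\neq x$ for all $m$ and every neighborhood of $x$ contains $x_{nm}$ for all but finitely many $m$. The game $\alpha^{\mathrm{game}}(X,x)$ is played by ONE and TWO in innings $n\in\mathbb N$: in the $n$-th inning ONE chooses a sequence $S_n\subseteq X$ converging to $x$, and TWO responds with an infinite $T_n\subseteq S_n$. TWO wins if $\bigcup_nT_n$ converges to $x$; otherwise ONE wins. $X$ is $\alpha_{2^-}$ if for each $x\in X$, whenever $\lim_m x_{nm}=x$ for all $n$, there are $m_1<m_2<\dots$ with $\bigcup_n\{x_{1m_n},\dots,x_{nm_n}\}$ converging to $x$. $X$ is locally Ramsey if for each $x\in X$, whenever $\lim_m x_{nm}=x$ for all $n$, there is an infinite $I\subseteq\mathbb N$ with $\{x_{nm}: n,m\in I, n<m\}$ converging to $x$. *)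

From mathcomp Require Import all_boot all_order.
From mathcomp Require Import boolp classical_sets functions cardinality topology.
Set Implicit Arguments. Unset Strict Implicit. Unset Printing Implicit Defensive.
Local Open Scope classical_set_scope.

Section Defs.
Variable X : topologicalType.

Definition conv_set (A : set X) (x : X) : Prop :=
  ~ A x /\ forall U, nbhs x U -> finite_set (A `\` U).

Definition is_sequence (A : set X) : Prop := countable A /\ infinite_set A.

Definition converges_seq (A : set X) (x : X) : Prop :=
  is_sequence A /\ conv_set A x.

Definition lim_seq (f : nat -> X) (x : X) : Prop :=
  (forall m, f m <> x) /\
  forall U, nbhs x U -> finite_set [set m | ~ U (f m)].

(* Strategies of ONE in alpha^game(X,x): maps from the list of TWO's previous
   moves T_0,...,T_{n-1} to ONE's next move S_n. *)
Definition strategy_ONE := seq (set X) -> set X.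

Definition legal_ONE (x : X) (sigma : strategy_ONE) : Prop :=
  forall h, converges_seq (sigma h) x.

Definition play_against (sigma : strategy_ONE) (T : nat -> set X) : Prop :=
  forall n, T n `<=` sigma (mkseq T n) /\ infinite_set (T n).

Definition ONE_has_winning_strategy (x : X) : Prop :=
  exists sigma : strategy_ONE, legal_ONE x sigma /\
    forall T, play_against sigma T -> ~ converges_seq (\bigcup_n T n) x.

Definition alpha2minus : Prop :=
  forall (x : X) (f : nat -> nat -> X), (forall n, lim_seq (f n) x) ->
  exists m : nat -> nat, (forall n, (m n < m n.+1)%N) /\
    conv_set [set y | exists n k, (k <= n)%N /\ y = f k (m n)] x.

Definition locally_Ramsey : Prop :=
  forall (x : X) (f : nat -> nat -> X), (forall n, lim_seq (f n) x) ->
  exists I : set nat, infinite_set I /\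
    conv_set [set y | exists n m, I n /\ I m /\ (n < m)%N /\ y = f n m] x.

End Defs.

(* Given rows [f n] converging to [x], ONE plays the following strategy.  It
   keeps a decreasing sequence of infinite sets of column indices; in inning
   [n] it proposes the points of row [n] over the current indices, and after
   TWO answers with [T n] it keeps only the indices where row [n] lands in
   [T n] (or in every neighbourhood of [x]).  A play where TWO wins yields
   index sets [J n] such that all [f k m] with [m \in J k] together converge
   to [x]; a diagonal choice of columns then witnesses alpha_{2-}, and a
   further thinning of that diagonal witnesses the local Ramsey property. *)
From mathcomp Require Import all_boot all_order.
From mathcomp Require Import boolp classical_sets functions cardinality topology.
Set Implicit Arguments. Unset Strict Implicit. Unset Printing Implicit Defensive.
Local Open Scope classical_set_scope.

Lemma infinite_set_natP (A : set nat) :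
  infinite_set A <-> forall k, exists2 j, A j & (k < j)%N.
Proof.
split=> [Ainf k | Aunb].
  apply: contrapT => noj; apply: Ainf.
  apply: sub_finite_set (finite_II k.+1) => j Aj /=.
  by rewrite ltnS leqNgt; apply/negP => kj; apply: noj; exists j.
move=> /finite_fsetP [s As].
have [j Aj] := Aunb (\max_(i <- finmap.enum_fset s) i)%N.
move: Aj; rewrite As /= => js.
by rewrite ltnNge (@leq_bigmax_seq nat _ xpredT id j js).
Qed.

Lemma increasing_choice (J : nat -> set nat) :
  (forall n, infinite_set (J n)) ->
  exists m : nat -> nat, (forall n, m n < m n.+1)%N /\ forall n, J n (m n).
Proof.
move=> Jinf; have /all_sig2 [g Jg gk] : forall nk, {j | J nk.1 j & (nk.2 < j)%N}.
  by move=> [n k]; apply/cid2/(infinite_set_natP _).1.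
exists (fix m n := if n is n'.+1 then g (n, m n') else g (0, 0))%N.
by split=> [n | [|n]]; [exact: (gk (_, _)) | exact: (Jg (_, _))..].
Qed.

Lemma incr_leq_self (m : nat -> nat) :
  (forall n, m n < m n.+1)%N -> forall n, (n <= m n)%N.
Proof. by move=> m_incr; elim=> // n IH; exact: leq_ltn_trans IH (m_incr n). Qed.

Lemma conv_set_subset (X : topologicalType) (A B : set X) (x : X) :
  A `<=` B -> conv_set B x -> conv_set A x.
Proof.
move=> AB [Bx Bfin]; split; first by move/AB.
by move=> U xU; apply: sub_finite_set (Bfin U xU) => y [/AB By Uy].
Qed.

Lemma alpha2minus_locally_Ramsey (X : topologicalType) :
  alpha2minus X -> locally_Ramsey X.
Proof.
move=> alpha x f f_lim; have [m [m_incr conv]] := alpha x f f_lim.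
have m_mono : {mono m : i j / (i < j)%N}.
  exact/leqW_mono/leq_mono/(homo_ltn ltn_trans m_incr).
(* As [m (p j) < p j.+1], the pair [(m (p a), m (p b))] with [a < b] is the
   entry of row [m (p a) <= p b] in column [m (p b)] of the alpha_{2-} set. *)
pose p := fix p j := if j is j'.+1 then (m (p j')).+1 else 0%N.
have p_incr j : (p j < p j.+1)%N by rewrite ltnS incr_leq_self.
have p_le : {mono p : i j / (i <= j)%N}.
  exact/leq_mono/(homo_ltn ltn_trans p_incr).
exists (range (m \o p)); split.
  apply/infinite_set_natP => k; exists (m (p k.+1)); first by exists k.+1.
  exact: leq_trans (incr_leq_self p_incr k.+1) (incr_leq_self m_incr _).
apply: conv_set_subset conv => _ [_ [_ [[a _ <-] [[b _ <-] [ab ->]]]]].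
exists (p b), (m (p a)); split => //.
have {}ab : (a < b)%N by rewrite -(leqW_mono p_le) -m_mono.
by apply: ltnW; rewrite -[(m (p a)).+1]/(p a.+1) p_le.
Qed.

Section DiagonalStrategy.
Variables (X : topologicalType) (x : X) (f : nat -> nat -> X).
Hypothesis f_lim : forall n, lim_seq (f n) x.

(* Points of every neighbourhood of [x].  Rows may hit them when [X] is not T1;
   they can never spoil convergence to [x], so ONE discards them from its
   moves but keeps their indices. *)
Definition nbhs_core : set X := [set y | forall U, nbhs x U -> U y].

Lemma finite_fiber n y : ~ nbhs_core y -> finite_set [set m | f n m = y].
Proof.
move=> /existsNP [U /not_implyP [xU Uy]].
by apply: sub_finite_set (proj2 (f_lim n) U xU) => m /= ->.
Qed.

Fixpoint survivors (T : nat -> set X) n : set nat :=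
  if n is k.+1 then
    if `[< infinite_set (f k @` survivors T k `\` nbhs_core) >]
    then survivors T k `&` f k @^-1` (T k `|` nbhs_core)
    else survivors T k `&` f k @^-1` nbhs_core
  else setT.

Definition challenge T n := f n @` survivors T n `\` nbhs_core.

Definition responds (T : nat -> set X) :=
  forall n, infinite_set (challenge T n) -> T n `<=` challenge T n /\ infinite_set (T n).

Lemma survivors_ext T T' n :
  (forall k, (k < n)%N -> T k = T' k) -> survivors T n = survivors T' n.
Proof.
elim: n => [//|n IH] TT' /=.
by rewrite IH => [|k kn]; [rewrite TT' | apply/TT'/ltnW].
Qed.

Lemma challenge_mkseq T n : challenge (nth set0 (mkseq T n)) n = challenge T n.
Proof. by rewrite /challenge (@survivors_ext _ T) // => k kn; rewrite nth_mkseq. Qed.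

Lemma survivorsS T n : survivors T n.+1 `<=` survivors T n.
Proof. by move=> m /=; case: asboolP => _ []. Qed.

Lemma survivors_le T k n : (k <= n)%N -> survivors T n `<=` survivors T k.
Proof.
elim: n => [|n IH]; first by rewrite leqn0 => /eqP ->.
rewrite leq_eqVlt => /orP [/eqP -> // | /IH kn m /survivorsS]; exact: kn.
Qed.

Lemma survivors_image T k m : survivors T k.+1 m -> (T k `|` nbhs_core) (f k m).
Proof. by move=> /=; case: asboolP => _ [_ ?] //; right. Qed.

Lemma challenge_converges T n :
  infinite_set (challenge T n) -> converges_seq (challenge T n) x.
Proof.
move=> Cinf; split; first split => //.
  apply: card_le_trans (card_image_le (f n) setT).
  by apply: subset_card_le => _ [[m _ <-] _]; exists m.
split; first by move=> [[m _ fmx] _]; apply: (proj1 (f_lim n) m).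
move=> U xU; apply: sub_finite_set (finite_image (f n) (proj2 (f_lim n) U xU)).
by move=> _ [[[m _ <-] _] Ufm]; exists m.
Qed.

Lemma survivors_infinite T : responds T -> forall n, infinite_set (survivors T n).
Proof.
move=> Tresp; elim=> [|n IH] /=; first exact: infinite_nat.
case: asboolP => Cinf.
  have [TC Tinf] := Tresp n Cinf; apply: contra_not Tinf => fin.
  apply: sub_finite_set (finite_image (f n) fin) => y Ty.
  by have [[m Sm fm] _] := TC y Ty; exists m; rewrite // /= fm; split => //; left.
have Cfin : finite_set (challenge T n) by apply: contrapT.
have lost : finite_set (\bigcup_(y in challenge T n) [set m | f n m = y]).
  by apply: bigcup_finite => // y [_]; apply: finite_fiber.
apply: contra_not IH => fin.
apply: (sub_finite_set (B := (survivors T n `&` f n @^-1` nbhs_core) `|`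
                             \bigcup_(y in challenge T n) [set m | f n m = y])).
  move=> m Sm; have [core|ncore] := pselect (nbhs_core (f n m)); first by left.
  by right; exists (f n m).
by rewrite finite_setU; split.
Qed.

Lemma survivors_conv T : responds T -> conv_set (\bigcup_n T n) x ->
  conv_set [set y | exists k m, survivors T k.+1 m /\ y = f k m] x.
Proof.
move=> Tresp [_ Tfin]; split.
  by move=> [k [m [_ /esym]]]; apply: (proj1 (f_lim k)).
move=> U xU; apply: sub_finite_set (Tfin U xU) => _ [[k [m [Sm ->]]] Ufm].
split => //; case: (survivors_image Sm) => [Tkfm | core]; first by exists k.
by case: Ufm; apply: core.
Qed.

Lemma exists_responding_convergent_play : ~ ONE_has_winning_strategy x ->
  exists T, responds T /\ conv_set (\bigcup_n T n) x.
Proof.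
move=> noONE.
have [[S0 S0x] | noseq] := pselect (exists S0, converges_seq S0 x); last first.
  exists (fun=> set0); split.
    move=> n /challenge_converges Cx; case: noseq.
    by exists (challenge (fun=> set0) n).
  by split=> [[_ _ []] | U _]; apply: sub_finite_set (finite_set0 X) => y [[_ _ []]].
(* S0 is a legal dummy move for the innings where the challenge is finite. *)
pose sigma : strategy_ONE X := fun h =>
  if `[< converges_seq (challenge (nth set0 h) (size h)) x >]
  then challenge (nth set0 h) (size h) else S0.
have sigma_legal : legal_ONE x sigma by move=> h; rewrite /sigma; case: asboolP.
have [T [Tplay Tconv]] :
    exists T, play_against sigma T /\ converges_seq (\bigcup_n T n) x.
  apply: contrapT => noT; apply: noONE; exists sigma; split => // T Tplay Tconv.
  by apply: noT; exists T.
exists T; split; last exact: Tconv.2.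
move=> n Cinf; have [Tsub Tinf] := Tplay n; split => //.
move: Tsub; rewrite /sigma size_mkseq challenge_mkseq.
by case: asboolP => // Cnconv; case: Cnconv; apply: challenge_converges.
Qed.

End DiagonalStrategy.

Lemma alpha2minus_of_no_winning_ONE (X : topologicalType) :
  (forall x : X, ~ ONE_has_winning_strategy x) -> alpha2minus X.
Proof.
move=> noONE x f f_lim.
have [T [Tresp Tconv]] := exists_responding_convergent_play f_lim (noONE x).
have [m [m_incr Sm]] :=
  increasing_choice (fun n => survivors_infinite f_lim Tresp (n := n.+1)).
exists m; split => //.
apply: conv_set_subset (survivors_conv f_lim Tresp Tconv) => _ [n [k [kn ->]]].
by exists k, (m n); split => //; apply: (survivors_le (k := k.+1) _ (Sm n)).
Qed.

Theorem proposition2p10 (X : topologicalType) :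
  (forall x : X, ~ ONE_has_winning_strategy x) ->
  alpha2minus X /\ locally_Ramsey X.
Proof.
move=> noONE; have alpha := alpha2minus_of_no_winning_ONE noONE.
by split; last exact: alpha2minus_locally_Ramsey.
Qed.
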